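(* Let $\mathbb{Q}$ be a path measure on $[0,T]$ in $\mathbb{R}^d$, let $\Pi^*$ be a distribution on $\mathbb{R}^d$, let $\mathbb{Q}^x=\mathbb{Q}(\cdot\mid Z_T=x)$ and $\mathbb{Q}^{\Pi^*}=\int\mathbb{Q}^x\,\Pi^*(dx)$. Assume the Radon–Nikodym derivative $\pi^*(z)=\frac{d\Pi^*}{d\mathbb{Q}_T}(z)$ exists and is positive everywhere. Then $\mathbb{Q}^{\Pi^*}$ is Markov if and only if $\mathbb{Q}$ is Markov.
   Context: $\mathbb{Q}_T$ denotes the law of $Z_T$ under $\mathbb{Q}$; $\mathbb{Q}^{\Pi^*}$ is the law of a path obtained by drawing $x\sim\Pi^*$ then $Z\sim\mathbb{Q}^x$. *)

From HB Require Import structures.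
From mathcomp Require Import all_boot all_order all_algebra.
From mathcomp Require Import all_classical all_reals all_analysis.
From mathcomp Require Import measurable_realfun.
Set Implicit Arguments. Unset Strict Implicit. Unset Printing Implicit Defensive.
Import Order.TTheory GRing.Theory Num.Theory.
Local Open Scope classical_set_scope.
Local Open Scope ring_scope.

(* Path space on [0,T] in R^d: functions time -> R^d (R^d = d.-tuple R with its
   product (= Borel) sigma-algebra from the library), equipped with the
   cylinder sigma-algebra generated by the coordinate maps Z_t, t in [0,T].
   Zproc t = canonical coordinate process Z_t.
   past t / future t = sigma(Z_s, s <= t) / sigma(Z_s, s >= t).
   cond_version P t A g : g(Z_t) is a version of P(A | Z_t).
   is_markov P : for all t, past and future are conditionally independent
   given Z_t under P, i.e. P(A /\ B | Z_t) = P(A | Z_t) P(B | Z_t) a.s. *)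
Section defs.
Variables (R : realType) (d : nat) (T : R).

Definition time := {t : R | 0 <= t <= T}.

Definition path_carrier := time -> d.-tuple R.
HB.instance Definition _ := gen_eqMixin path_carrier.
HB.instance Definition _ := gen_choiceMixin path_carrier.
HB.instance Definition _ := isPointed.Build path_carrier (fun _ => nseq_tuple d 0).
Definition pathgen (S : set time) : set (set path_carrier) :=
  fun A => exists t, S t /\ exists B : set (d.-tuple R),
    measurable B /\ A = (fun w => w t) @^-1` B.

Definition pathsp := @g_sigma_algebraType path_carrier (pathgen setT).


Definition endT (hT : 0 < T) : time :=
  exist (fun t : R => 0 <= t <= T) T (introT andP (conj (ltW hT) (lexx T))).

Definition Zproc (t : time) (w : pathsp) : d.-tuple R := w t.

Definition past (t : time) : set (set pathsp) :=
  <<s pathgen [set s | sval s <= sval t] >>.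
Definition future (t : time) : set (set pathsp) :=
  <<s pathgen [set s | sval t <= sval s] >>.

Local Open Scope ereal_scope.
Definition cond_version (P : probability pathsp R) (t : time) (A : set pathsp)
   (g : d.-tuple R -> R) :=
  measurable_fun setT g /\
  forall C : set (d.-tuple R), measurable C ->
    P (A `&` Zproc t @^-1` C) = \int[P]_(w in Zproc t @^-1` C) (g (Zproc t w))%:E.

Definition is_markov (P : probability pathsp R) :=
  forall (t : time) (A B : set pathsp), past t A -> future t B ->
  forall gA gB, cond_version P t A gA -> cond_version P t B gB ->
  cond_version P t (A `&` B) (fun x => gA x * gB x)%R.
End defs.

(* Both Q^Pi and Q are obtained from each other by a change of measure whose
   density is a positive function of the endpoint Z_T: Q^Pi = pi*(Z_T) Q and
   Q = pi*(Z_T)^-1 Q^Pi.  So it suffices that a density phi(Z_T) preserves the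
   Markov property.  If Q is Markov and f(Z_t) is a version of Q(A | Z_t) for a
   past event A, then f(Z_t) is also a version of Q(A | future at t).  Since
   phi(Z_T) is measurable for the future at t, the same f(Z_t) is a version of
   P(A | future at t) for P = phi(Z_T) Q, and the product formula for P follows
   by integrating against versions of P(B | Z_t), B in the future. *)

From HB Require Import structures.
From mathcomp Require Import all_boot all_order all_algebra.
From mathcomp Require Import all_classical all_reals all_analysis.
From mathcomp Require Import measurable_realfun ring.
Import Order.TTheory GRing.Theory Num.Theory.
Set Implicit Arguments. Unset Strict Implicit. Unset Printing Implicit Defensive.
Local Open Scope classical_set_scope.
Local Open Scope ring_scope.

Section integral_lemmas.
Context d (X : measurableType d) (R : realType).
Variable mu : {measure set X -> \bar R}.
Local Open Scope ereal_scope.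

Lemma integral_indicr (S : set X) (f : X -> \bar R) :
  \int[mu]_(x in S) f x = \int[mu]_x (f x * (\1_S x)%:E).
Proof. by rewrite integral_mkcond epatch_indic. Qed.

Lemma integral_lt0_null (S : set X) (h : X -> \bar R) : measurable S ->
  measurable_fun S h -> (forall x, S x -> h x < 0) ->
  0 <= \int[mu]_(x in S) h x -> mu S = 0.
Proof.
move=> mS mh h_lt0 int_ge0.
have int_abs0 : \int[mu]_(x in S) `|h x| = 0.
  rewrite (eq_integral (fun x => - h x)); last first.
    by move=> x /[!inE] Sx; rewrite lte0_abs// h_lt0.
  apply/eqP; rewrite eq_le integral_ge0 ?andbT; last first.
    by move=> x Sx; rewrite oppe_ge0 ltW// h_lt0.
  have hE : \int[mu]_(x in S) h x = - \int[mu]_(x in S) - h x.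
    rewrite -integral_ge0N; first by apply: eq_integral => x _; rewrite oppeK.
    by move=> x Sx; rewrite oppe_ge0 ltW// h_lt0.
  by move: int_ge0; rewrite hE oppe_ge0.
have [N [mN muN0 sub]] := (ae_eq_integral_abs mu mS mh).1 int_abs0.
apply/eqP; rewrite -measure_le0 -muN0 le_measure ?inE// => x Sx.
by apply: sub => /= /(_ Sx) hx0; move: (h_lt0 x Sx); rewrite hx0 ltxx.
Qed.

Lemma measurable_ltr0 (g : X -> R) : measurable_fun setT g ->
  measurable [set y | (g y < 0)%R].
Proof.
move=> mg; rewrite (_ : [set y | _] = g @^-1` `]-oo, 0%R[); last first.
  by apply/seteqP; split => y /=; rewrite in_itv.
by rewrite -[X in measurable X]setTI; exact: mg.
Qed.

End integral_lemmas.

Section weighted_image.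
Context d d' (X : measurableType d) (Y : measurableType d') (R : realType).
Variables (mu : {measure set X -> \bar R}) (Z : X -> Y) (rho : X -> \bar R).
Hypotheses (mZ : measurable_fun setT Z) (mrho : measurable_fun setT rho).
Hypotheses (rho_ge0 : forall x, (0 <= rho x)%E) (rho_fin : forall x, rho x \is a fin_num).
Local Open Scope ereal_scope.
Import HBNNSimple.

Lemma integral_nnsfun_comp (s : {nnsfun Y >-> R}) :
  \int[mu]_x ((s (Z x))%:E * rho x) =
  \sum_(r \in range s) r%:E * \int[mu]_(x in Z @^-1` (s @^-1` [set r])) rho x.
Proof.
have sE x : (s (Z x))%:E * rho x = \sum_(r \in range s)
    (r * \1_(s @^-1` [set r]) (Z x))%:E * rho x.
  by rewrite fimfunE -fsumEFin// ge0_mule_fsuml// => r; exact: nnfun_muleindic_ge0.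
under eq_integral do rewrite sE.
rewrite ge0_integral_fsum//; last 2 first.
- move=> r; apply: emeasurable_funM => //; apply/measurable_EFinP.
  by apply: measurable_funM => //; exact: measurableT_comp.
- by move=> r x _; rewrite mule_ge0// nnfun_muleindic_ge0.
apply: eq_fsbigr => r; rewrite inE => -[y _ <-].
under eq_integral do rewrite EFinM -muleA.
rewrite ge0_integralZl ?lee_fin//; first last.
- by move=> x _; rewrite mule_ge0 ?lee_fin.
- by apply: emeasurable_funM => //; exact/measurable_EFinP/measurableT_comp.
by rewrite [in RHS]integral_indicr; under eq_integral do rewrite muleC.
Qed.

Lemma integral_comp_approx (phi : Y -> \bar R) (mphi : measurable_fun setT phi) :
  (forall y, 0 <= phi y) ->
  \int[mu]_x (phi (Z x) * rho x) =
  limn (fun n => \int[mu]_x ((nnsfun_approx measurableT mphi n (Z x))%:E * rho x)).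
Proof.
move=> phi_ge0; pose s := nnsfun_approx measurableT mphi.
transitivity (\int[mu]_x limn (fun n => (s n (Z x))%:E * rho x)).
  apply: eq_integral => x _; apply/esym/cvg_lim => //; apply: cvgeZr => //.
  exact: (cvg_nnsfun_approx measurableT mphi (fun y _ => phi_ge0 y)).
apply: monotone_convergence => //.
- move=> n; apply: emeasurable_funM => //.
  exact/measurable_EFinP/measurableT_comp.
- by move=> n x _; rewrite mule_ge0 ?lee_fin.
- move=> x _ m n mn; rewrite lee_wpmul2r// lee_fin.
  exact/lefP/nd_nnsfun_approx.
Qed.

End weighted_image.

Section eq_integral_comp.
Context d1 d2 d' (X1 : measurableType d1) (X2 : measurableType d2)
  (Y : measurableType d') (R : realType).
Local Open Scope ereal_scope.
Import HBNNSimple.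

Lemma eq_ge0_integral_comp (mu1 : {measure set X1 -> \bar R})
    (mu2 : {measure set X2 -> \bar R}) (Z1 : X1 -> Y) (Z2 : X2 -> Y)
    (rho1 : X1 -> \bar R) (rho2 : X2 -> \bar R) (phi : Y -> \bar R) :
  measurable_fun setT Z1 -> measurable_fun setT Z2 ->
  measurable_fun setT rho1 -> measurable_fun setT rho2 ->
  (forall x, 0 <= rho1 x) -> (forall x, 0 <= rho2 x) ->
  (forall x, rho1 x \is a fin_num) -> (forall x, rho2 x \is a fin_num) ->
  (forall D, measurable D ->
    \int[mu1]_(x in Z1 @^-1` D) rho1 x = \int[mu2]_(x in Z2 @^-1` D) rho2 x) ->
  measurable_fun setT phi -> (forall y, 0 <= phi y) ->
  \int[mu1]_x (phi (Z1 x) * rho1 x) = \int[mu2]_x (phi (Z2 x) * rho2 x).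
Proof.
move=> mZ1 mZ2 mrho1 mrho2 rho1_ge0 rho2_ge0 rho1_fin rho2_fin eq_rho mphi phi_ge0.
rewrite (integral_comp_approx mu1 mZ1)// (integral_comp_approx mu2 mZ2)//.
congr (limn _); apply/funext => n.
rewrite !integral_nnsfun_comp//; apply: eq_fsbigr => r _.
by rewrite eq_rho.
Qed.

End eq_integral_comp.

Section density.
Context d (X : measurableType d) (R : realType).
Local Open Scope ereal_scope.
Implicit Types (P Q : {measure set X -> \bar R}) (h : X -> R).

Lemma ge0_integral_density P Q h : measurable_fun setT h -> (forall x, (0 <= h x)%R) ->
  (forall A, measurable A -> P A = \int[Q]_(x in A) (h x)%:E) ->
  forall f : X -> \bar R, measurable_fun setT f -> (forall x, 0 <= f x) ->
  \int[P]_x f x = \int[Q]_x (f x * (h x)%:E).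
Proof.
move=> mh h_ge0 hPQ f mf f_ge0.
transitivity (\int[P]_x (f (id x) * (\1_setT x)%:E)).
  by apply: eq_integral => x _; rewrite indicT mule1.
apply: (eq_ge0_integral_comp (rho2 := fun x => (h x)%:E)) => //.
- exact/measurable_EFinP.
- exact/measurable_EFinP.
- by move=> D mD; rewrite integral_indic// setTI -hPQ.
Qed.

Lemma measurable_funV_gt0 h : measurable_fun setT h -> (forall x, (0 < h x)%R) ->
  measurable_fun setT (fun x => (h x)^-1)%R.
Proof.
move=> mh h_gt0; rewrite (_ : (fun x => _) = fun x => (h x `^ (-1))%R); last first.
  by apply/funext => x; rewrite powR_inv1// ltW.
exact: measurableT_comp (measurable_powR _) mh.
Qed.

Lemma density_inv P Q h : measurable_fun setT h -> (forall x, (0 < h x)%R) ->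
  (forall A, measurable A -> P A = \int[Q]_(x in A) (h x)%:E) ->
  forall A, measurable A -> Q A = \int[P]_(x in A) ((h x)^-1)%:E.
Proof.
move=> mh h_gt0 hPQ A mA.
have mhV := measurable_funV_gt0 mh h_gt0.
rewrite integral_indicr (ge0_integral_density mh _ hPQ); last 3 first.
- by move=> x; exact: ltW.
- by apply: emeasurable_funM; exact/measurable_EFinP.
- by move=> x; rewrite -EFinM lee_fin mulr_ge0// invr_ge0 ltW.
rewrite -[in LHS](setIT A) -integral_indic//; apply: eq_integral => x _.
by rewrite -!EFinM mulrAC mulVf ?mul1r// gt_eqF.
Qed.

End density.

Section factorized_density.
Context d d' (X : measurableType d) (Y : measurableType d') (R : realType).
Local Open Scope ereal_scope.

(* The library's measure instance on [pushforward mu f] takes the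
   measurability of [f] as an argument, which instance inference cannot find. *)
Definition image_measure (mu : {measure set X -> \bar R}) (f : {mfun X >-> Y}) :
  {measure set Y -> \bar R}.
Proof. by refine (pushforward mu f : {measure set Y -> \bar R}); exact: measurable_funPT. Defined.

Lemma factorized_density_exists (P : probability X R) (f : {mfun X >-> Y})
    (A : set X) : measurable A ->
  exists g : Y -> R, [/\ measurable_fun setT g, forall y, (0 <= g y)%R &
    forall C, measurable C ->
      P (A `&` f @^-1` C) = \int[P]_(x in f @^-1` C) (g (f x))%:E].
Proof.
move=> mA; have mf := @measurable_funPT _ _ _ _ f.
pose nu0 := image_measure (mrestr P mA) f.
have nu0E C : nu0 C = P (A `&` f @^-1` C) by rewrite setIC.
have nu0_fin : nu0 setT < +oo.
  by rewrite nu0E preimage_setT setIT ltey_eq fin_num_measure.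
pose nu := mfrestr measurableT nu0_fin.
have nuE C : nu C = P (A `&` f @^-1` C) by rewrite /nu /mfrestr /mrestr setIT nu0E.
pose mu := distribution P f.
have numu : nu `<< mu.
  apply/null_content_dominatesP => C mC muC0; rewrite nuE.
  apply/eqP; rewrite -measure_le0 -muC0 le_measure ?inE//.
  - by apply: measurableI => //; exact: measurable_funPTI.
  - exact: measurable_funPTI.
pose g := Radon_Nikodym_SigmaFinite.f nu mu.
have mg : measurable_fun setT g.
  exact: measurable_int (Radon_Nikodym_SigmaFinite.f_integrable numu).
exists (fine \o g); split => [|y|C mC].
- exact: measurableT_comp.
- exact/fine_ge0/Radon_Nikodym_SigmaFinite.f_ge0.
- rewrite -nuE; apply: eq_trans (Radon_Nikodym_SigmaFinite.f_integral numu mC) _.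
  transitivity (\int[P]_(x in f @^-1` C) ((EFin \o fine \o g) \o f) x); last by [].
  rewrite -(ge0_integral_pushforward mf) //=.
  + apply: eq_integral => y _; rewrite fineK//.
    exact: Radon_Nikodym_SigmaFinite.f_fin_num.
  + exact/measurable_EFinP/measurable_funTS/measurableT_comp.
  + by move=> y _; rewrite lee_fin fine_ge0// Radon_Nikodym_SigmaFinite.f_ge0.
Qed.

End factorized_density.

Section null_preimage.
Context d d' (X : measurableType d) (Y : measurableType d') (R : realType).
Variables (mu : {measure set X -> \bar R}) (f : {mfun X >-> Y}).
Local Open Scope ereal_scope.

Lemma integral_preimage_eq_off_null (N : set Y) (u v : Y -> R) :
  measurable N -> mu (f @^-1` N) = 0 ->
  measurable_fun setT u -> measurable_fun setT v -> (forall y, ~ N y -> u y = v y) ->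
  forall C, measurable C ->
  \int[mu]_(x in f @^-1` C) (u (f x))%:E = \int[mu]_(x in f @^-1` C) (v (f x))%:E.
Proof.
move=> mN muN0 mu_ mv uv C mC; apply: ae_eq_integral.
- exact: measurable_funPTI.
- exact/measurable_EFinP/measurable_funTS/measurableT_comp.
- exact/measurable_EFinP/measurable_funTS/measurableT_comp.
exists (f @^-1` N); split => //; first exact: measurable_funPTI.
by move=> x /= uvx; apply: contrapT => Nfx; apply: uvx => _; rewrite uv.
Qed.

End null_preimage.

Section mixture.
Context d d' (X : measurableType d) (Y : measurableType d') (R : realType).
Local Open Scope ereal_scope.

Lemma mixture_density (Q : probability X R) (f : {mfun X >-> Y})
    (Pi : {measure set Y -> \bar R}) (pis : Y -> R) (K : Y -> probability X R) :
  measurable_fun setT pis -> (forall y, (0 <= pis y)%R) ->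
  (forall B, measurable B -> Pi B = \int[distribution Q f]_(y in B) (pis y)%:E) ->
  (forall A, measurable A -> measurable_fun setT (fun y => K y A)) ->
  (forall A B, measurable A -> measurable B ->
    Q (A `&` f @^-1` B) = \int[distribution Q f]_(y in B) K y A) ->
  forall A, measurable A -> \int[Pi]_y K y A = \int[Q]_(x in A) (pis (f x))%:E.
Proof.
move=> mpis pis_ge0 Pi_density mK K_cond A mA.
rewrite (ge0_integral_density mpis pis_ge0 Pi_density); last 2 first.
- exact: mK.
- by move=> y; exact: measure_ge0.
under eq_integral do rewrite muleC.
rewrite [RHS]integral_indicr; symmetry.
apply: (eq_ge0_integral_comp (Z1 := f) (Z2 := id) (rho1 := fun x => (\1_A x)%:E)
  (rho2 := fun y => K y A) (phi := fun y => (pis y)%:E)) => //.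
- exact/measurable_EFinP/measurable_indic.
- exact: mK.
- by move=> y; exact: fin_num_measure.
- move=> D mD; rewrite integral_indic//; last exact: measurable_funPTI.
  exact: K_cond.
- exact/measurable_EFinP.
Qed.

End mixture.

Section path_space.
Context (R : realType) (d : nat) (T : R).
Local Open Scope ereal_scope.

Lemma measurable_Zproc (t : time T) : measurable_fun setT (@Zproc R d T t).
Proof.
move=> _ B mB; rewrite setTI; apply: sub_gen_smallest.
by exists t; split => //; exists B.
Qed.

HB.instance Definition _ (t : time T) :=
  isMeasurableFun.Build _ _ _ _ (@Zproc R d T t) (measurable_Zproc t).

Lemma sigma_pathgen_measurable (S : set (time T)) (A : set (pathsp d T)) :
  <<s @pathgen R d T S >> A -> measurable A.
Proof.
apply: smallest_sub; first exact: sigma_algebra_measurable.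
by move=> _ [s [_ [B [mB ->]]]]; apply: sub_gen_smallest; exists s; split => //; exists B.
Qed.

Lemma futureI (t : time T) (A B : set (pathsp d T)) :
  future t A -> future t B -> future t (A `&` B).
Proof. exact: (@measurableI _ (g_sigma_algebraType (@pathgen R d T _))). Qed.

Lemma le_endT (hT : (0 < T)%R) (t : time T) : (sval t <= sval (endT hT))%R.
Proof. by case: t => s /= /andP[]. Qed.

Lemma future_preimage (t s : time T) (D : set (d.-tuple R)) :
  (sval t <= sval s)%R -> measurable D -> future t (Zproc s @^-1` D).
Proof.
by move=> ts mD; apply: sub_gen_smallest; exists s; split => //; exists D.
Qed.


Variable P : probability (pathsp d T) R.

Lemma cond_version_exists (t : time T) (A : set (pathsp d T)) : measurable A ->
  exists g : d.-tuple R -> R,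
    [/\ measurable_fun setT g, forall y, (0 <= g y)%R & cond_version P t A g].
Proof.
move=> mA; have [g [mg g_ge0 gA]] := factorized_density_exists P (Zproc t) mA.
by exists g; split.
Qed.

Lemma cond_version_integral (t : time T) (E : set (pathsp d T)) (g : d.-tuple R -> R)
    (psi : d.-tuple R -> \bar R) :
  measurable E -> (forall y, (0 <= g y)%R) -> cond_version P t E g ->
  measurable_fun setT psi -> (forall y, 0 <= psi y) ->
  \int[P]_(w in E) psi (Zproc t w) = \int[P]_w (psi (Zproc t w) * (g (Zproc t w))%:E).
Proof.
move=> mE g_ge0 [mg gE] mpsi psi_ge0; rewrite integral_indicr.
apply: (eq_ge0_integral_comp (Z1 := Zproc t) (Z2 := Zproc t)
  (rho1 := fun w => (\1_E w)%:E) (rho2 := fun w => (g (Zproc t w))%:E)) => //.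
- exact/measurable_EFinP/measurable_indic.
- exact/measurable_EFinP/measurableT_comp.
- by move=> w; rewrite lee_fin.
- move=> D mD; rewrite integral_indic//; last exact: measurable_funPTI.
  exact: gE.
Qed.

Lemma cond_version_lt0_null (t : time T) (E : set (pathsp d T)) (g : d.-tuple R -> R) :
  cond_version P t E g -> P (Zproc t @^-1` [set y | (g y < 0)%R]) = 0.
Proof.
move=> [mg gE]; have mN := measurable_ltr0 mg.
apply: (integral_lt0_null (h := fun w => (g (Zproc t w))%:E)).
- exact: measurable_funPTI.
- exact/measurable_EFinP/measurable_funTS/measurableT_comp.
- by move=> w; rewrite lte_fin.
- by rewrite -gE.
Qed.

(* Versions may be negative on a null set; positive parts let the
   nonnegative integration lemmas apply. *)
Lemma cond_version_maxr (t : time T) (E : set (pathsp d T)) (g : d.-tuple R -> R) :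
  cond_version P t E g -> cond_version P t E (fun y => Num.max (g y) 0%R).
Proof.
move=> gE; have [mg gEC] := gE.
have mgp : measurable_fun setT (fun y => Num.max (g y) 0%R).
  exact: measurable_maxr.
split => // C mC; rewrite gEC//.
apply: integral_preimage_eq_off_null (measurable_ltr0 mg) _ mg mgp _ C mC.
- exact: cond_version_lt0_null gE.
- by move=> y /negP; rewrite -leNgt => g_ge0; rewrite max_l.
Qed.

Lemma integral_cond_version_mul (t : time T) (A B : set (pathsp d T))
    (gA gB : d.-tuple R -> R) :
  cond_version P t A gA -> cond_version P t B gB ->
  forall C, measurable C ->
  \int[P]_(w in Zproc t @^-1` C) (gA (Zproc t w) * gB (Zproc t w))%:E =
  \int[P]_(w in Zproc t @^-1` C)
    (Num.max (gA (Zproc t w)) 0 * Num.max (gB (Zproc t w)) 0)%:E.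
Proof.
move=> gAA gBB; have [mgA _] := gAA; have [mgB _] := gBB.
have mN := measurableU _ _ (measurable_ltr0 mgA) (measurable_ltr0 mgB).
apply: (integral_preimage_eq_off_null (mu := P) (f := Zproc t)
  (u := fun y => (gA y * gB y)%R) (v := fun y => (Num.max (gA y) 0 * Num.max (gB y) 0)%R) mN).
- apply/eqP; rewrite -measure_le0 preimage_setU.
  rewrite -(cond_version_lt0_null gAA) -[leRHS]adde0 -(cond_version_lt0_null gBB).
  by apply: measureU2; apply: measurable_funPTI; exact: measurable_ltr0.
- exact: measurable_funM mgA mgB.
- by apply: measurable_funM; exact: measurable_maxr.
- by move=> y /not_orP[/negP + /negP]; rewrite -!leNgt => gA_ge0 gB_ge0; rewrite !max_l.
Qed.

End path_space.

Definition future_cond_version (R : realType) (d : nat) (T : R)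
    (P : probability (pathsp d T) R) (t : time T) (A : set (pathsp d T))
    (g : d.-tuple R -> R) :=
  forall F, future t F -> P (A `&` F) = (\int[P]_(w in F) (g (Zproc t w))%:E)%E.

Section markov_density.
Context (R : realType) (d : nat) (T : R).
Local Open Scope ereal_scope.
Implicit Types (P Q : probability (pathsp d T) R) (A B F : set (pathsp d T)).

Lemma markov_future_cond_version Q (t : time T) A (f : d.-tuple R -> R) :
  is_markov Q -> past t A -> (forall y, (0 <= f y)%R) -> cond_version Q t A f ->
  future_cond_version Q t A f.
Proof.
move=> Q_markov pA f_ge0 fA F fF; have mF := sigma_pathgen_measurable fF.
have [g [mg g_ge0 gF]] := cond_version_exists Q t mF.
have [_ QAF] := Q_markov t A F pA fF f g fA gF.
have := QAF setT measurableT; rewrite !preimage_setT setIT => ->.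
rewrite (cond_version_integral (psi := fun y => (f y)%:E) mF g_ge0 gF).
- by apply: eq_integral => w _; rewrite EFinM.
- by apply/measurable_EFinP; case: fA.
- by move=> y; rewrite lee_fin.
Qed.

Lemma future_cond_version_density (hT : (0 < T)%R) P Q (phi : d.-tuple R -> R)
    (t : time T) A (f : d.-tuple R -> R) :
  measurable_fun setT phi -> (forall y, (0 <= phi y)%R) ->
  (forall S, measurable S -> P S = \int[Q]_(w in S) (phi (Zproc (endT hT) w))%:E) ->
  measurable A -> measurable_fun setT f -> (forall y, (0 <= f y)%R) ->
  future_cond_version Q t A f -> future_cond_version P t A f.
Proof.
move=> mphi phi_ge0 P_density mA mf f_ge0 fA F fF.
have mF := sigma_pathgen_measurable fF.
rewrite P_density; last exact: measurableI.
rewrite integral_indicr.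
transitivity (\int[Q]_w ((phi (Zproc (endT hT) w))%:E * (\1_F w * f (Zproc t w))%:E)).
  apply: (eq_ge0_integral_comp (phi := fun y => (phi y)%:E)
    (rho1 := fun w => (\1_(A `&` F) w)%:E)
    (rho2 := fun w => (\1_F w * f (Zproc t w))%:E)) => //.
  - exact/measurable_EFinP/measurable_indic/measurableI.
  - apply/measurable_EFinP/measurable_funM; first exact: measurable_indic.
    exact: measurableT_comp.
  - by move=> w; rewrite lee_fin mulr_ge0.
  - move=> D mD; have mZD := measurable_funPTI (Zproc (endT hT)) mD.
    rewrite integral_indic; [|exact: mZD|exact: measurableI].
    rewrite -(setIA A F).
    apply: eq_trans (fA _ (futureI fF (future_preimage (le_endT hT t) mD))) _.
    rewrite [LHS]integral_indicr [RHS]integral_indicr; apply: eq_integral => w _.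
    by rewrite -!EFinM indicI /=; congr EFin; ring.
  - exact/measurable_EFinP.
rewrite [RHS]integral_indicr (ge0_integral_density _ _ P_density).
- by apply: eq_integral => w _; rewrite -!EFinM; congr EFin; ring.
- exact: measurableT_comp.
- by move=> w; exact: phi_ge0.
- by apply/measurable_EFinP; apply: measurable_funM;
    [exact: measurableT_comp | exact: measurable_indic].
- by move=> w; rewrite lee_fin mulr_ge0.
Qed.

Lemma future_cond_versionW P (t : time T) A (f : d.-tuple R -> R) :
  measurable_fun setT f -> future_cond_version P t A f -> cond_version P t A f.
Proof. by move=> mf fA; split => // C mC; exact: fA (future_preimage (lexx _) mC). Qed.

Lemma future_cond_version_markov P (t : time T) A B (f gA gB : d.-tuple R -> R) :
  measurable A -> future t B -> measurable_fun setT f -> (forall y, (0 <= f y)%R) ->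
  future_cond_version P t A f -> cond_version P t A gA -> cond_version P t B gB ->
  cond_version P t (A `&` B) (fun y => gA y * gB y)%R.
Proof.
move=> mA fB mf f_ge0 fA gAA gBB; have mB := sigma_pathgen_measurable fB.
have [mgA _] := gAA; have [mgB _] := gBB.
set gAp := fun y => Num.max (gA y) 0%R; set gBp := fun y => Num.max (gB y) 0%R.
have gAp_ge0 y : (0 <= gAp y)%R by rewrite le_max lexx orbT.
have gBp_ge0 y : (0 <= gBp y)%R by rewrite le_max lexx orbT.
have mgAp : measurable_fun setT gAp by exact: measurable_maxr.
have mgBp : measurable_fun setT gBp by exact: measurable_maxr.
have fAA := future_cond_versionW mf fA.
split=> [|C mC]; first exact: measurable_funM.
have mZC := measurable_funPTI (Zproc t) mC.
rewrite -setIA (fA _ (futureI fB (future_preimage (lexx _) mC))).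
rewrite (integral_cond_version_mul gAA gBB mC) [RHS]integral_indicr.
transitivity (\int[P]_(w in B) (f (Zproc t w) * \1_C (Zproc t w))%:E).
  rewrite [LHS]integral_indicr [RHS]integral_indicr; apply: eq_integral => w _.
  by rewrite -!EFinM indicI /=; congr EFin; ring.
have mpsi (h : d.-tuple R -> R) : measurable_fun setT h ->
    measurable_fun setT (fun y => (h y * \1_C y)%:E).
  by move=> mh; apply/measurable_EFinP/measurable_funM => //; exact: measurable_indic.
have psi_ge0 (h : d.-tuple R -> R) : (forall y, 0 <= h y)%R ->
    forall y, 0 <= (h y * \1_C y)%:E.
  by move=> h_ge0 y; rewrite lee_fin mulr_ge0.
rewrite (cond_version_integral mB gBp_ge0 (cond_version_maxr gBB) (mpsi _ mf)
  (psi_ge0 _ f_ge0)).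
transitivity (\int[P]_w ((gBp (Zproc t w) * \1_C (Zproc t w))%:E * (f (Zproc t w))%:E)).
  by apply: eq_integral => w _; rewrite -!EFinM; congr EFin; ring.
rewrite -(cond_version_integral mA f_ge0 fAA (mpsi _ mgBp) (psi_ge0 _ gBp_ge0)).
rewrite (cond_version_integral mA gAp_ge0 (cond_version_maxr gAA) (mpsi _ mgBp)
  (psi_ge0 _ gBp_ge0)).
by apply: eq_integral => w _; rewrite /gAp /gBp -!EFinM; congr EFin; ring.
Qed.

Lemma markov_density (hT : (0 < T)%R) P Q (phi : d.-tuple R -> R) :
  measurable_fun setT phi -> (forall y, (0 <= phi y)%R) ->
  (forall S, measurable S -> P S = \int[Q]_(w in S) (phi (Zproc (endT hT) w))%:E) ->
  is_markov Q -> is_markov P.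
Proof.
move=> mphi phi_ge0 P_density Q_markov t A B pA fB gA gB gAA gBB.
have mA := sigma_pathgen_measurable pA.
have [f [mf f_ge0 fA]] := cond_version_exists Q t mA.
have fQ := markov_future_cond_version Q_markov pA f_ge0 fA.
have fP := future_cond_version_density mphi phi_ge0 P_density mA mf f_ge0 fQ.
exact: future_cond_version_markov mA fB mf f_ge0 fP gAA gBB.
Qed.

End markov_density.

Theorem proposition9 (R : realType) (d : nat) (T : R) (hT : 0 < T)
  (Q : probability (pathsp d T) R)
  (Pi : probability (d.-tuple R) R)
  (pis : d.-tuple R -> R)
  (pis_meas : measurable_fun setT pis)
  (pis_pos : forall z, 0 < pis z)
  (pis_RN : forall B : set (d.-tuple R), measurable B ->
     Pi B = (\int[pushforward Q (Zproc (endT hT))]_(x in B) (pis x)%:E)%E)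
  (Qx : d.-tuple R -> probability (pathsp d T) R)
  (Qx_meas : forall A : set (pathsp d T), measurable A ->
     @measurable_fun _ _ (d.-tuple R) (\bar R) setT (fun x => Qx x A))
  (Qx_cond : forall (A : set (pathsp d T)) (B : set (d.-tuple R)),
     measurable A -> measurable B ->
     Q (A `&` Zproc (endT hT) @^-1` B) =
       (\int[pushforward Q (Zproc (endT hT))]_(x in B) Qx x A)%E)
  (QPi : probability (pathsp d T) R)
  (QPi_def : forall A : set (pathsp d T), measurable A ->
     QPi A = (\int[Pi]_x Qx x A)%E) :
  is_markov QPi <-> is_markov Q.
Proof.
have pis_ge0 z : 0 <= pis z by exact: ltW.
have QPi_density S : measurable S ->
    QPi S = (\int[Q]_(w in S) (pis (Zproc (endT hT) w))%:E)%E.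
  move=> mS; rewrite QPi_def//.
  exact: (mixture_density pis_meas pis_ge0 pis_RN Qx_meas Qx_cond mS).
have mpisZ := measurableT_comp pis_meas (measurable_Zproc (endT hT)).
have Q_density := density_inv mpisZ (fun w => pis_pos _) QPi_density.
split => markov.
- apply: (markov_density (phi := fun z => (pis z)^-1) _ _ Q_density markov).
  + exact: measurable_funV_gt0.
  + by move=> z; rewrite invr_ge0.
- exact: (markov_density pis_meas pis_ge0 QPi_density markov).
Qed.
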